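(* Let $S$ be a closed (compact, connected, oriented, without boundary) surface of genus $g\ge1$ and $M$ a single point of $S$. Then every ideal triangulation of $(S,M)$ has property (T4): at the puncture at least four arcs are incident.
   Context: Arcs incident to a puncture are counted with multiplicity: an arc with both endpoints at the puncture counts twice. *)

From mathcomp Require Import all_boot all_fingroup.
Set Implicit Arguments. Unset Strict Implicit. Unset Printing Implicit Defensive.

(* A triangulated combinatorial map on darts D (half-edges = ends of arcs):
   - [edge] is a fixed-point-free involution pairing the two ends of an arc;
   - [node] rotates (counter-clockwise) around a marked point (puncture);
   - [face] walks around a triangle; edge \o node \o face = id (hypermap
     convention); every face orbit has exactly 3 darts (ideal triangles,
     self-folded ones allowed);
   - the map is connected (the surface is connected).
   Orientability comes from the rotation system. *)
Definition triangulated_map (D : finType) (edge node face : {perm D}) : Prop :=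
  [/\ forall x, edge (node (face x)) = x,
      forall x, edge (edge x) = x /\ edge x != x,
      forall x, fingraph.order face x = 3,
      (0 < #|D|)%N &
      forall x y, connect (fun a b => [|| b == edge a, b == node a | b == face a]) x y].

Definition n_punctures (D : finType) (node : {perm D}) : nat := fcard node D.
Definition n_arcs (D : finType) (edge : {perm D}) : nat := fcard edge D.
Definition n_triangles (D : finType) (face : {perm D}) : nat := fcard face D.

(* The surface has genus g: Euler characteristic V - E + F = 2 - 2g. *)
Definition has_genus (D : finType) (edge node face : {perm D}) (g : nat) : Prop :=
  (n_punctures node + n_triangles face + 2 * g = n_arcs edge + 2)%N.

Definition ideal_triangulation (D : finType) (edge node face : {perm D})
  (g m : nat) : Prop :=
  [/\ triangulated_map edge node face, has_genus edge node face g &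
      n_punctures node = m].

(* Number of arcs incident to the puncture containing dart x, counted with
   multiplicity (an arc with both ends there counts twice) = number of
   arc-ends (darts) around that puncture. *)
Definition puncture_degree (D : finType) (node : {perm D}) (x : D) : nat :=
  fingraph.order node x.

From mathcomp Require Import all_boot all_fingroup.
From mathcomp Require Import zify.

(* Each arc contributes two darts and each triangle three, so with a single
   puncture Euler's relation [1 - #|D|/2 + #|D|/3 = 2 - 2g] forces
   [#|D| = 12g - 6]; all darts lie around the puncture, whose degree is
   therefore [12g - 6 >= 6]. *)

Set Implicit Arguments.
Unset Strict Implicit.
Unset Printing Implicit Defensive.

Section PermOrbits.

Variables (T : finType) (f : {perm T}).

Lemma fcard_const_order k :
  (forall x, fingraph.order f x = k) -> (fcard f T * k = #|T|)%N.
Proof.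
move=> ordk; rewrite -(@fcard_order_set _ f (@perm_inj _ f) k T) //.
by apply/subsetP => y _; rewrite inE ordk.
Qed.

Lemma order_fpf_involution x : f (f x) = x -> f x != x -> fingraph.order f x = 2.
Proof.
move=> ffx fx_neq; apply: (@order_cycle _ f [:: x; f x]) => /=.
- by rewrite ffx !eqxx.
- by rewrite inE eq_sym fx_neq.
- by rewrite inE eqxx.
Qed.

Lemma order_single_orbit x : fcard f T = 1 -> fingraph.order f x = #|T|.
Proof.
move=> one_orbit; apply/eqP; rewrite eqn_leq max_card /=.
apply/subset_leq_card/subsetP => y _; rewrite inE.
apply/negPn/negP => not_xy.
have : (1 < fcard f T)%N.
  apply/fcard_gt1P; [exact: perm_inj | by move=> ? ? _ | by exists x; [|exists y]].
by rewrite one_orbit.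
Qed.

End PermOrbits.

Lemma triangulation_card_darts (D : finType) (edge node face : {perm D}) :
  triangulated_map edge node face ->
  (n_arcs edge * 2 = #|D|)%N /\ (n_triangles face * 3 = #|D|)%N.
Proof.
case=> _ edge_fpf face3 _ _; split; last exact: fcard_const_order.
by apply: fcard_const_order => y; have [] := edge_fpf y; exact: order_fpf_involution.
Qed.

Lemma puncture_degree_once_punctured (g : nat) (D : finType)
    (edge node face : {perm D}) (x : D) :
  ideal_triangulation edge node face g 1 ->
  puncture_degree node x = (12 * g - 6)%N.
Proof.
case=> map_edge genus one_puncture.
have [darts_arcs darts_triangles] := triangulation_card_darts map_edge.
rewrite /puncture_degree order_single_orbit //.
by move: genus; rewrite /has_genus one_puncture; lia.
Qed.

Theorem lemma5p3 (g : nat) (D : finType) (edge node face : {perm D}) :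
  (1 <= g)%N ->
  ideal_triangulation edge node face g 1 ->
  forall x : D, (4 <= puncture_degree node x)%N.
Proof.
move=> g_pos tri x; rewrite (puncture_degree_once_punctured x tri).
lia.
Qed.
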